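(* Let $\mathcal M$ be a general model for CTT$_{\rm qe}$, $\phi$ an assignment into $\mathcal M$, $\mathbf x_\alpha$ a variable, $\beta$ a type, and $\mathbf A_\epsilon$ an eval-free expression of type $\epsilon$ in which $\mathbf x_\alpha$ is not free. If $V^{\mathcal M}_\phi(\mathsf{is\text{-}expr}^{\beta}_{\epsilon\to o}\,\mathbf A_\epsilon)=\mathrm T$, then $V^{\mathcal M}_\phi([\![\mathsf{abs}_{\epsilon\to\epsilon\to\epsilon}\,\ulcorner\mathbf x_\alpha\urcorner\,\mathbf A_\epsilon]\!]_{\alpha\to\beta})=V^{\mathcal M}_\phi(\lambda\mathbf x_\alpha.[\![\mathbf A_\epsilon]\!]_\beta)$.
   Context: The logic CTT$_{\rm qe}$. Types: $\iota$ (individuals), $o$ (truth values), $\epsilon$ (constructions), and $(\alpha\to\beta)$ for types $\alpha,\beta$. Let $\mathcal V$ be a set of typed symbols (variables) containing denumerably many symbols $\mathbf{x}_\alpha$ of each type $\alpha$, and $\mathcal C$ a disjoint set of typed symbols (constants) containing the logical constants $=_{\alpha\to\alpha\to o}$ (each $\alpha$), $\mathsf{is\text{-}var}_{\epsilon\to o}$, $\mathsf{is\text{-}var}^\alpha_{\epsilon\to o}$, $\mathsf{is\text{-}con}_{\epsilon\to o}$, $\mathsf{is\text{-}con}^\alpha_{\epsilon\to o}$, $\mathsf{app}_{\epsilon\to\epsilon\to\epsilon}$, $\mathsf{abs}_{\epsilon\to\epsilon\to\epsilon}$, $\mathsf{quo}_{\epsilon\to\epsilon}$, $\mathsf{is\text{-}expr}_{\epsilon\to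 o}$, $\mathsf{is\text{-}expr}^\alpha_{\epsilon\to o}$ (each $\alpha$), $\sqsubset_{\epsilon\to\epsilon\to o}$, $\mathsf{is\text{-}free\text{-}in}_{\epsilon\to\epsilon\to o}$. Expressions $\mathbf{A}_\alpha$ (subscript = type) are defined inductively: (1) a variable $\mathbf{x}_\alpha$; (2) a constant $\mathbf{c}_\alpha$; (3) application $(\mathbf{F}_{\alpha\to\beta}\,\mathbf{A}_\alpha)$ of type $\beta$; (4) abstraction $(\lambda\mathbf{x}_\alpha.\mathbf{B}_\beta)$ of type $\alpha\to\beta$; (5) quotation $\ulcorner\mathbf{A}_\alpha\urcorner$ of type $\epsilon$, formed only if $\mathbf{A}_\alpha$ is eval-free; (6) evaluation $[\![\mathbf{A}_\epsilon]\!]_{\mathbf{B}_\beta}$ of type $\beta$, written $[\![\mathbf{A}_\epsilon]\!]_\beta$ (the second component only fixes the type). An expression is eval-free if built using rules (1)–(5) only. A formula is an expression of type $o$. In an eval-free expression, an occurrence of a variable $\mathbf{x}_\alpha$ is free if it is not inside a quotation and not inside a subexpression of the form $\lambda\mathbf{x}_\alpha.\mathbf{C}$; $\mathbf{x}_\alpha$ is free in $\mathbf{B}$ if it has a free occurrence there. Constructions: the smallest set of expressions of type $\epsilon$ containing all $\ulcorner\mathbf{x}_\alpha\urcorner$ and $\ulcorner\mathbf{c}_\alpha\urcorner$ and closed under forming $\mathsf{app}\,\mathbf{A}_\epsilon\,\mathbf{B}_\epsilon$, $\mathsf{abs}\,\mathbf{A}_\epsilon\,\mathbf{B}_\epsilon$,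 $\mathsf{quo}\,\mathbf{A}_\epsilon$. The injective map $\mathcal E$ from eval-free expressions to constructions: $\mathcal E(\mathbf{x}_\alpha)=\ulcorner\mathbf{x}_\alpha\urcorner$, $\mathcal E(\mathbf{c}_\alpha)=\ulcorner\mathbf{c}_\alpha\urcorner$, $\mathcal E(\mathbf{F}\,\mathbf{A})=\mathsf{app}\,\mathcal E(\mathbf F)\,\mathcal E(\mathbf A)$, $\mathcal E(\lambda\mathbf{x}_\alpha.\mathbf B)=\mathsf{abs}\,\mathcal E(\mathbf x_\alpha)\,\mathcal E(\mathbf B)$, $\mathcal E(\ulcorner\mathbf A\urcorner)=\mathsf{quo}\,\mathcal E(\mathbf A)$. Abbreviations: $\mathbf A_\alpha=\mathbf B_\alpha$ is $=_{\alpha\to\alpha\to o}\mathbf A_\alpha\mathbf B_\alpha$; $T_o$ is $(=_{o\to o\to o}\,=\,=_{o\to o\to o})$; $F_o$ is $(\lambda x_o.T_o)=(\lambda x_o.x_o)$; $\forall\mathbf x_\alpha.\mathbf A_o$ is $(\lambda\mathbf x_\alpha.T_o)=(\lambda\mathbf x_\alpha.\mathbf A_o)$; $\neg\mathbf A_o$ is $=_{o\to o\to o}F_o\,\mathbf A_o$; $\exists\mathbf x_\alpha.\mathbf A_o$ is $\neg\forall\mathbf x_\alpha.\neg\mathbf A_o$; $\mathbf A\neq\mathbf B$ is $\neg(\mathbf A=\mathbf B)$; $\mathsf{IS\text{-}EFFECTIVE\text{-}IN}(\mathbf x_\alpha,\mathbf B_\beta)$ is $\exists\mathbf y_\alpha.((\lambda\mathbf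 x_\alpha.\mathbf B_\beta)\,\mathbf y_\alpha\neq\mathbf B_\beta)$ for a variable $\mathbf y_\alpha$ distinct from $\mathbf x_\alpha$. Semantics. A frame is $\{D_\alpha\}$ with $D_\iota$ nonempty, $D_o=\{\mathrm T,\mathrm F\}$, $D_\epsilon$ the set of all constructions, and $D_{\alpha\to\beta}$ some set of total functions $D_\alpha\to D_\beta$. An interpretation $(\{D_\alpha\},I)$ has $I(\mathbf c_\alpha)\in D_\alpha$ for each constant, with: $I(=_{\alpha\to\alpha\to o})$ the (curried) identity relation on $D_\alpha$; $I(\mathsf{is\text{-}var})(A)=\mathrm T$ iff $A=\ulcorner\mathbf x_\beta\urcorner$ for some variable of some type; $I(\mathsf{is\text{-}var}^\alpha)(A)=\mathrm T$ iff $A=\ulcorner\mathbf x_\alpha\urcorner$ for some variable of type $\alpha$; likewise $\mathsf{is\text{-}con}$, $\mathsf{is\text{-}con}^\alpha$ with constants; $I(\mathsf{app})(A)(B)$, $I(\mathsf{abs})(A)(B)$, $I(\mathsf{quo})(A)$ are the constructions $\mathsf{app}\,A\,B$, $\mathsf{abs}\,A\,B$, $\mathsf{quo}\,A$; $I(\mathsf{is\text{-}expr})(A)=\mathrm T$ iff $A=\mathcal E(\mathbf B_\beta)$ for some eval-free $\mathbf B_\beta$ of some type; $I(\mathsf{is\text{-}expr}^\alpha)(A)=\mathrm T$ iff $A=\mathcal E(\mathbf B_\alpha)$ for some eval-free $\mathbf B_\alpha$; $I(\sqsubset)(A)(B)=\mathrm T$ iff $A$ is a proper subexpression of $B$; $I(\mathsf{is\text{-}free\text{-}in})(A)(B)=\mathrm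 T$ iff $A=\ulcorner\mathbf x_\alpha\urcorner$, $B=\mathcal E(\mathbf C_\beta)$ for some eval-free $\mathbf C_\beta$, and $\mathbf x_\alpha$ is free in $\mathbf C_\beta$. An assignment $\phi$ maps each $\mathbf x_\alpha\in\mathcal V$ into $D_\alpha$; $\phi[\mathbf x_\alpha\mapsto d]$ is the usual modification. A general model is an interpretation $\mathcal M$ for which there is a valuation $V^{\mathcal M}_\phi(\mathbf C_\gamma)\in D_\gamma$ (for all $\phi$ and all expressions) with: (V1) $V_\phi(\mathbf x_\alpha)=\phi(\mathbf x_\alpha)$; (V2) $V_\phi(\mathbf c_\alpha)=I(\mathbf c_\alpha)$; (V3) $V_\phi(\mathbf F\,\mathbf A)=V_\phi(\mathbf F)(V_\phi(\mathbf A))$; (V4) $V_\phi(\lambda\mathbf x_\alpha.\mathbf B_\beta)$ is the $f\in D_{\alpha\to\beta}$ with $f(d)=V_{\phi[\mathbf x_\alpha\mapsto d]}(\mathbf B_\beta)$; (V5) $V_\phi(\ulcorner\mathbf A_\alpha\urcorner)=\mathcal E(\mathbf A_\alpha)$; (V6) if $V_\phi(\mathsf{is\text{-}expr}^\beta\,\mathbf A_\epsilon)=\mathrm T$ then $V_\phi([\![\mathbf A_\epsilon]\!]_\beta)=V_\phi(\mathcal E^{-1}(V_\phi(\mathbf A_\epsilon)))$; (V7) for each $\beta$ there is a fixed $d_\beta\in D_\beta$ such that $V_\phi([\![\mathbf A_\epsilon]\!]_\beta)=d_\beta$ whenever $V_\phi(\mathsf{is\text{-}expr}^\beta\,\mathbf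 A_\epsilon)=\mathrm F$. $\mathcal M\models\mathbf A_o$ ($\mathbf A_o$ valid in $\mathcal M$) iff $V_\phi(\mathbf A_o)=\mathrm T$ for all $\phi$; $\models\mathbf A_o$ (valid in CTT$_{\rm qe}$) iff valid in every general model. A standard model is an interpretation in which every $D_{\alpha\to\beta}$ is the set of all total functions $D_\alpha\to D_\beta$. *)

From Stdlib Require Import Bool Arith.

Inductive ty : Type :=
| Iota : ty
| O : ty
| Eps : ty
| Fn : ty -> ty -> ty.

Scheme Equality for ty.

(* The logical constants, plus denumerably many non-logical constants
   [CUser n a] of each type [a]. *)
Inductive con : Type :=
| CEq (a : ty)
| CIsVar
| CIsVarA (a : ty)
| CIsCon
| CIsConA (a : ty)
| CApp
| CAbs
| CQuo
| CIsExpr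
| CIsExprA (a : ty)
| CSub
| CIsFreeIn
| CUser (n : nat) (a : ty).

Definition contype (c : con) : ty :=
  match c with
  | CEq a => Fn a (Fn a O)
  | CIsVar | CIsVarA _ | CIsCon | CIsConA _ | CIsExpr | CIsExprA _ => Fn Eps O
  | CApp | CAbs => Fn Eps (Fn Eps Eps)
  | CQuo => Fn Eps Eps
  | CSub | CIsFreeIn => Fn Eps (Fn Eps O)
  | CUser _ a => a
  end.

(* Variables are pairs (name, type): [Var x a] is the variable x_a.
   Evaluation [Eval A b] is [[A]]_b (the second component only fixes the type). *)
Inductive expr : Type :=
| Var (x : nat) (a : ty)
| Con (c : con)
| App (F A : expr)
| Abs (x : nat) (a : ty) (B : expr)
| Quo (A : expr)
| Eval (A : expr) (b : ty).

Fixpoint eval_free (e : expr) : bool :=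
  match e with
  | Var _ _ | Con _ => true
  | App F A => eval_free F && eval_free A
  | Abs _ _ B => eval_free B
  | Quo A => eval_free A
  | Eval _ _ => false
  end.

Fixpoint typeof (e : expr) : option ty :=
  match e with
  | Var _ a => Some a
  | Con c => Some (contype c)
  | App F A =>
      match typeof F, typeof A with
      | Some (Fn a b), Some a' => if ty_beq a a' then Some b else None
      | _, _ => None
      end
  | Abs _ a B =>
      match typeof B with Some b => Some (Fn a b) | None => None end
  | Quo A =>
      match typeof A with
      | Some _ => if eval_free A then Some Eps else None
      | None => None
      end
  | Eval A b =>
      match typeof A with Some Eps => Some b | _ => None end
  end.

Fixpoint free_in (x : nat) (a : ty) (e : expr) : bool :=
  match e with
  | Var y b => Nat.eqb x y && ty_beq a b
  | Con _ => false
  | App F A => free_in x a F || free_in x a A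
  | Abs y b B => negb (Nat.eqb x y && ty_beq a b) && free_in x a B
  | Quo _ => false
  | Eval A _ => free_in x a A (* irrelevant: only used on eval-free exprs *)
  end.

Fixpoint is_cons (e : expr) : bool :=
  match e with
  | Quo (Var _ _) => true
  | Quo (Con _) => true
  | App (App (Con CApp) A) B => is_cons A && is_cons B
  | App (App (Con CAbs) A) B => is_cons A && is_cons B
  | App (Con CQuo) A => is_cons A
  | _ => false
  end.

(* The map E from eval-free expressions to constructions
   (the Eval clause is irrelevant, E is only applied to eval-free exprs). *)
Fixpoint Enc (e : expr) : expr :=
  match e with
  | Var x a => Quo (Var x a)
  | Con c => Quo (Con c)
  | App F A => App (App (Con CApp) (Enc F)) (Enc A)
  | Abs x a B => App (App (Con CAbs) (Quo (Var x a))) (Enc B)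
  | Quo A => App (Con CQuo) (Enc A)
  | Eval A _ => Enc A
  end.

Inductive sub1 : expr -> expr -> Prop :=
| sub1_appF F A : sub1 F (App F A)
| sub1_appA F A : sub1 A (App F A)
| sub1_absx x a B : sub1 (Var x a) (Abs x a B)
| sub1_absB x a B : sub1 B (Abs x a B)
| sub1_quo A : sub1 A (Quo A)
| sub1_eval A b : sub1 A (Eval A b).

Inductive psub : expr -> expr -> Prop :=
| psub_one e e' : sub1 e e' -> psub e e'
| psub_step e e' e'' : sub1 e e' -> psub e' e'' -> psub e e''.

(* Domains of a frame: D_iota = Di, D_o = bool, D_eps = all constructions,
   D_(a->b) = an abstract carrier Dfn a b, which (via the injective
   application map [ap] below) is a set of total functions D_a -> D_b. *)
Fixpoint Dom0 (Di : Type) (Dfn : ty -> ty -> Type) (t : ty) : Type :=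
  match t with
  | Iota => Di
  | O => bool
  | Eps => { e : expr | is_cons e = true }
  | Fn a b => Dfn a b
  end.

Record interp : Type := {
  Di : Type;
  Di_inh : Di;
  Dfn : ty -> ty -> Type;
  ap : forall a b, Dom0 Di Dfn (Fn a b) -> Dom0 Di Dfn a -> Dom0 Di Dfn b;
  ap_ext : forall a b (f g : Dom0 Di Dfn (Fn a b)),
      (forall d, ap a b f d = ap a b g d) -> f = g;
  I : forall c : con, Dom0 Di Dfn (contype c);
  I_eq : forall a (d1 d2 : Dom0 Di Dfn a),
      ap a O (ap a (Fn a O) (I (CEq a)) d1) d2 = true <-> d1 = d2;
  I_isvar : forall A : Dom0 Di Dfn Eps,
      ap Eps O (I CIsVar) A = true <-> exists x b, proj1_sig A = Quo (Var x b);
  I_isvarA : forall a (A : Dom0 Di Dfn Eps),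
      ap Eps O (I (CIsVarA a)) A = true <-> exists x, proj1_sig A = Quo (Var x a);
  I_iscon : forall A : Dom0 Di Dfn Eps,
      ap Eps O (I CIsCon) A = true <-> exists c, proj1_sig A = Quo (Con c);
  I_isconA : forall a (A : Dom0 Di Dfn Eps),
      ap Eps O (I (CIsConA a)) A = true <->
      exists c, contype c = a /\ proj1_sig A = Quo (Con c);
  I_app : forall A B : Dom0 Di Dfn Eps,
      proj1_sig (ap Eps Eps (ap Eps (Fn Eps Eps) (I CApp) A) B)
      = App (App (Con CApp) (proj1_sig A)) (proj1_sig B);
  I_abs : forall A B : Dom0 Di Dfn Eps,
      proj1_sig (ap Eps Eps (ap Eps (Fn Eps Eps) (I CAbs) A) B)
      = App (App (Con CAbs) (proj1_sig A)) (proj1_sig B);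
  I_quo : forall A : Dom0 Di Dfn Eps,
      proj1_sig (ap Eps Eps (I CQuo) A) = App (Con CQuo) (proj1_sig A);
  I_isexpr : forall A : Dom0 Di Dfn Eps,
      ap Eps O (I CIsExpr) A = true <->
      exists B b, eval_free B = true /\ typeof B = Some b /\ Enc B = proj1_sig A;
  I_isexprA : forall a (A : Dom0 Di Dfn Eps),
      ap Eps O (I (CIsExprA a)) A = true <->
      exists B, eval_free B = true /\ typeof B = Some a /\ Enc B = proj1_sig A;
  I_sub : forall A B : Dom0 Di Dfn Eps,
      ap Eps O (ap Eps (Fn Eps O) (I CSub) A) B = true <->
      psub (proj1_sig A) (proj1_sig B);
  I_isfreein : forall A B : Dom0 Di Dfn Eps,
      ap Eps O (ap Eps (Fn Eps O) (I CIsFreeIn) A) B = true <->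
      exists x a C c, proj1_sig A = Quo (Var x a) /\ eval_free C = true /\
        typeof C = Some c /\ Enc C = proj1_sig B /\ free_in x a C = true
}.

Definition Dom (M : interp) : ty -> Type := Dom0 (Di M) (Dfn M).

Definition assignment (M : interp) : Type := forall (x : nat) (a : ty), Dom M a.

Definition upd (M : interp) (phi : assignment M) (x : nat) (a : ty) (d : Dom M a)
  : assignment M :=
  fun y b =>
    match ty_eq_dec a b with
    | left e => if Nat.eqb x y then eq_rect a (Dom M) d b e else phi y b
    | right _ => phi y b
    end.

(* A general model: an interpretation together with a valuation satisfying
   (V1)-(V7).  [V phi e a H] is V_phi(e) for an expression e of type a. *)
Record gmodel : Type := {
  gM :> interp;
  V : assignment gM -> forall (e : expr) (a : ty), typeof e = Some a -> Dom gM a;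
  V1 : forall phi x a (H : typeof (Var x a) = Some a), V phi (Var x a) a H = phi x a;
  V2 : forall phi c (H : typeof (Con c) = Some (contype c)),
      V phi (Con c) (contype c) H = I gM c;
  V3 : forall phi F A a b (HF : typeof F = Some (Fn a b)) (HA : typeof A = Some a)
         (H : typeof (App F A) = Some b),
      V phi (App F A) b H = ap gM a b (V phi F (Fn a b) HF) (V phi A a HA);
  V4 : forall phi x a B b (H : typeof (Abs x a B) = Some (Fn a b))
         (HB : typeof B = Some b) (d : Dom gM a),
      ap gM a b (V phi (Abs x a B) (Fn a b) H) d = V (upd gM phi x a d) B b HB;
  V5 : forall phi A (H : typeof (Quo A) = Some Eps),
      proj1_sig (V phi (Quo A) Eps H) = Enc A;
  V6 : forall phi A b (H1 : typeof (App (Con (CIsExprA b)) A) = Some O)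
         (HA : typeof A = Some Eps) (H : typeof (Eval A b) = Some b),
      V phi (App (Con (CIsExprA b)) A) O H1 = true ->
      forall B (HB : typeof B = Some b),
        eval_free B = true -> Enc B = proj1_sig (V phi A Eps HA) ->
        V phi (Eval A b) b H = V phi B b HB;
  V7 : forall b, exists d : Dom gM b,
      forall phi A (H1 : typeof (App (Con (CIsExprA b)) A) = Some O)
        (H : typeof (Eval A b) = Some b),
        V phi (App (Con (CIsExprA b)) A) O H1 = false ->
        V phi (Eval A b) b H = d
}.

(* The construction [abs ⌜x_a⌝ A] denotes [Enc (λx_a. B)] whenever [A] denotes
   [Enc B], so by (V6) its evaluation is the value of [λx_a. B].  Under any
   update [φ[x_a ↦ d]] the value of [A] is unchanged, because [x_a] is not free
   in the eval-free [A]; hence [[A]]_b still evaluates to the value of [B], and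
   the two functions agree pointwise. *)
From Stdlib Require Import Bool Arith Eqdep_dec.

Lemma ty_beq_refl (a : ty) : ty_beq a a = true.
Proof. exact (internal_ty_dec_lb a a eq_refl). Qed.

Lemma var_beq_sym x a z s :
  (Nat.eqb x z && ty_beq a s) = (Nat.eqb z x && ty_beq s a).
Proof.
  rewrite Nat.eqb_sym.
  destruct (ty_beq a s) eqn:Eas, (ty_beq s a) eqn:Esa; auto.
  - apply internal_ty_dec_bl in Eas; subst; rewrite ty_beq_refl in Esa; discriminate.
  - apply internal_ty_dec_bl in Esa; subst; rewrite ty_beq_refl in Eas; discriminate.
Qed.

Lemma upd_same (M : interp) (phi : assignment M) x a d : upd M phi x a d x a = d.
Proof.
  unfold upd. destruct (ty_eq_dec a a) as [e|n]; [|congruence].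
  rewrite Nat.eqb_refl, (UIP_dec ty_eq_dec e eq_refl). reflexivity.
Qed.

Lemma upd_other (M : interp) (phi : assignment M) x a d z s :
  (Nat.eqb x z && ty_beq a s) = false -> upd M phi x a d z s = phi z s.
Proof.
  intro Hne. unfold upd. destruct (ty_eq_dec a s) as [<-|n]; [|reflexivity].
  rewrite ty_beq_refl, andb_true_r in Hne. rewrite Hne. reflexivity.
Qed.

Lemma upd_agree_not_free (M : interp) (phi : assignment M) x a d e :
  free_in x a e = false ->
  forall z s, free_in z s e = true -> phi z s = upd M phi x a d z s.
Proof.
  intros Hnf z s Hz. symmetry. apply upd_other.
  destruct (Nat.eqb x z && ty_beq a s) eqn:E; [|reflexivity].
  apply andb_prop in E as [Exz Eas].
  apply Nat.eqb_eq in Exz; apply internal_ty_dec_bl in Eas; subst. congruence.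
Qed.

Lemma cons_val_inj (e1 e2 : {e : expr | is_cons e = true}) :
  proj1_sig e1 = proj1_sig e2 -> e1 = e2.
Proof.
  destruct e1 as [e1 p1], e2 as [e2 p2]; simpl; intros <-.
  f_equal. apply UIP_dec, bool_dec.
Qed.

Lemma typeof_App_inv F A t : typeof (App F A) = Some t ->
  exists a, typeof F = Some (Fn a t) /\ typeof A = Some a.
Proof.
  simpl. destruct (typeof F) as [[| | |a b]|]; try discriminate.
  destruct (typeof A) as [a'|]; try discriminate.
  destruct (ty_beq a a') eqn:Eaa; try discriminate.
  apply internal_ty_dec_bl in Eaa as <-. intros [= <-]. eauto.
Qed.

Lemma typeof_Abs_inv x a B t : typeof (Abs x a B) = Some t ->
  exists b, t = Fn a b /\ typeof B = Some b.
Proof.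
  simpl. destruct (typeof B) as [b|]; [|discriminate]. intros [= <-]. eauto.
Qed.

Lemma V_free_agree (M : gmodel) e : eval_free e = true ->
  forall phi psi t (H : typeof e = Some t),
  (forall z s, free_in z s e = true -> phi z s = psi z s) ->
  V M phi e t H = V M psi e t H.
Proof.
  induction e as [y c| c | F IHF A IHA | y c B IHB | A _ | ];
    intros Hef phi psi t H Hagree; simpl in Hef.
  - assert (c = t) as <- by (simpl in H; congruence).
    rewrite !V1. apply Hagree. simpl. rewrite Nat.eqb_refl, ty_beq_refl. reflexivity.
  - assert (contype c = t) as <- by (simpl in H; congruence).
    rewrite !V2. reflexivity.
  - apply andb_prop in Hef as [HefF HefA].
    destruct (typeof_App_inv _ _ _ H) as [a [HF HA]].
    rewrite !(V3 M _ F A a t HF HA H).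
    rewrite (IHF HefF phi psi _ HF), (IHA HefA phi psi _ HA); [reflexivity| |];
      intros z s Hz; apply Hagree; simpl; rewrite Hz; auto using orb_true_r.
  - destruct (typeof_Abs_inv _ _ _ _ H) as [b [-> HB]].
    apply (ap_ext M). intro d. rewrite !(V4 M _ y c B b H HB d).
    apply IHB; [exact Hef|]. intros z s Hz.
    destruct (Nat.eqb y z && ty_beq c s) eqn:Ebound.
    + apply andb_prop in Ebound as [Eyz Ecs].
      apply Nat.eqb_eq in Eyz; apply internal_ty_dec_bl in Ecs; subst.
      rewrite !upd_same. reflexivity.
    + rewrite !upd_other by exact Ebound. apply Hagree. simpl.
      rewrite var_beq_sym in Ebound. rewrite Ebound, Hz. reflexivity.
  - assert (Eps = t) as <-.
    { simpl in H. destruct (typeof A); [destruct (eval_free A)|]; congruence. }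
    apply cons_val_inj. rewrite !V5. reflexivity.
  - discriminate.
Qed.

Lemma V_isexprA_true (M : gmodel) phi b A (HA : typeof A = Some Eps)
  (H : typeof (App (Con (CIsExprA b)) A) = Some O) :
  V M phi (App (Con (CIsExprA b)) A) O H = true <->
  exists B, eval_free B = true /\ typeof B = Some b /\
            Enc B = proj1_sig (V M phi A Eps HA).
Proof.
  assert (HC : typeof (Con (CIsExprA b)) = Some (Fn Eps O)) by reflexivity.
  rewrite (V3 M phi _ _ Eps O HC HA H).
  rewrite (V2 M phi (CIsExprA b) HC : V M phi _ (Fn Eps O) HC = I M (CIsExprA b)).
  apply (I_isexprA M).
Qed.

(* (V6) with its hypothesis on [is-expr^b] discharged by the witness [B]. *)
Lemma V_Eval_Enc (M : gmodel) phi A b (HA : typeof A = Some Eps)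
  (H : typeof (Eval A b) = Some b) B (HB : typeof B = Some b) :
  eval_free B = true -> Enc B = proj1_sig (V M phi A Eps HA) ->
  V M phi (Eval A b) b H = V M phi B b HB.
Proof.
  intros HefB HEnc.
  assert (H1 : typeof (App (Con (CIsExprA b)) A) = Some O) by (simpl; rewrite HA; reflexivity).
  apply (V6 M phi A b H1 HA H); [|exact HefB|exact HEnc].
  apply (V_isexprA_true M phi b A HA). eauto.
Qed.

Lemma V_abs_quote (M : gmodel) phi x a A (HA : typeof A = Some Eps)
  (H : typeof (App (App (Con CAbs) (Quo (Var x a))) A) = Some Eps) :
  proj1_sig (V M phi (App (App (Con CAbs) (Quo (Var x a))) A) Eps H)
  = App (App (Con CAbs) (Quo (Var x a))) (proj1_sig (V M phi A Eps HA)).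
Proof.
  assert (HC : typeof (Con CAbs) = Some (Fn Eps (Fn Eps Eps))) by reflexivity.
  assert (HQ : typeof (Quo (Var x a)) = Some Eps) by reflexivity.
  assert (HCQ : typeof (App (Con CAbs) (Quo (Var x a))) = Some (Fn Eps Eps)) by reflexivity.
  rewrite (V3 M phi _ _ Eps Eps HCQ HA H), (V3 M phi _ _ Eps (Fn Eps Eps) HC HQ HCQ),
    (V2 M phi CAbs HC : V M phi _ (Fn Eps (Fn Eps Eps)) HC = I M CAbs), I_abs, V5.
  reflexivity.
Qed.

Theorem mainTheorem15 (M : gmodel) (phi : assignment M) (x : nat) (a b : ty)
  (A : expr) (HA : typeof A = Some Eps) (HefA : eval_free A = true)
  (HnfA : free_in x a A = false)
  (H1 : typeof (App (Con (CIsExprA b)) A) = Some O)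
  (H2 : typeof (Eval (App (App (Con CAbs) (Quo (Var x a))) A) (Fn a b)) = Some (Fn a b))
  (H3 : typeof (Abs x a (Eval A b)) = Some (Fn a b)) :
  V M phi (App (Con (CIsExprA b)) A) O H1 = true ->
  V M phi (Eval (App (App (Con CAbs) (Quo (Var x a))) A) (Fn a b)) (Fn a b) H2
  = V M phi (Abs x a (Eval A b)) (Fn a b) H3.
Proof.
  intros HT.
  apply (V_isexprA_true M phi b A HA) in HT as [B [HefB [HB HEnc]]].
  assert (HAbsB : typeof (Abs x a B) = Some (Fn a b)) by (simpl; rewrite HB; reflexivity).
  assert (HT : typeof (App (App (Con CAbs) (Quo (Var x a))) A) = Some Eps)
    by (simpl; rewrite HA; reflexivity).
  rewrite (V_Eval_Enc M phi _ (Fn a b) HT H2 (Abs x a B) HAbsB HefB)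
    by (rewrite (V_abs_quote M phi x a A HA); simpl; rewrite HEnc; reflexivity).
  apply (ap_ext M). intro d.
  assert (HEv : typeof (Eval A b) = Some b) by (simpl; rewrite HA; reflexivity).
  rewrite (V4 M phi x a B b HAbsB HB d), (V4 M phi x a (Eval A b) b H3 HEv d).
  symmetry. apply (V_Eval_Enc M _ A b HA HEv B HB HefB).
  rewrite <- (V_free_agree M A HefA phi); [exact HEnc|].
  apply upd_agree_not_free, HnfA.
Qed.
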